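(* Let $\alpha>1$ be rational and $t$ a positive integer. For any instance $(I,B,v,C)$, let $\mathrm{OPT}$ be the optimal value of the Max-Buying-PL-Limited Problem and $\mathrm{OPT}'$ the optimal value of the Max-Buying-PL-Limited-$(\alpha,t)$ Problem on it. Then $\mathrm{OPT}'\ge \mathrm{OPT}/\alpha$.
   Context: Items are $I=\{1,\dots,n\}$, bidders form a finite set $B$, $v=(v_{ib})$ is a non-negative integer valuation matrix and $C_i$ are non-negative integer capacities. Max-Buying-PL-Limited Problem: choose a pricing $p\in\mathbb{Q}_{\ge0}^I$ with $p_1\ge\dots\ge p_n$ and an allocation $x:B\to I\cup\{\emptyset\}$ such that each item $i$ is allocated to at most $C_i$ bidders and $x_b=i$ implies $p_i\le v_{ib}$, maximizing $\sum_{b:x_b\ne\emptyset}p_{x_b}$. For $k\ge0$ let $d_k=\max\{v_{ib}\}/\alpha^k$. Max-Buying-PL-Limited-$(\alpha,t)$ Problem: choose prices $p_1\ge\dots\ge p_n$ with each $p_i\in\{d_0,d_1,\dots\}$ and a set of item–bidder pairs $(i,b)$ such that each item $i$ is given to at most $C_i$ bidders, $p_i\le v_{ib}$ whenever $b$ receives $i$, and for every integer $r\ge0$ each bidder receives at most one item with price in $\{d_{rt},\dots,d_{(r+1)t-1}\}$; the profit is the sum of $p_i$ over allocated pairs $(i,b)$. *)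

From HB Require Import structures.
From mathcomp Require Import all_boot all_order all_algebra.
Set Implicit Arguments. Unset Strict Implicit. Unset Printing Implicit Defensive.
Import Order.TTheory GRing.Theory Num.Theory.
Local Open Scope ring_scope.

(* Items are 'I_n (item i+1 of the paper is the ordinal i), bidders a finType B,
   valuations v : 'I_n -> B -> nat, capacities C : 'I_n -> nat. *)

Definition nonincreasing_pricing (n : nat) (p : 'I_n -> rat) : Prop :=
  forall i j : 'I_n, (i <= j)%N -> p j <= p i.

Definition feasible_PL (n : nat) (B : finType) (v : 'I_n -> B -> nat)
  (C : 'I_n -> nat) (p : 'I_n -> rat) (x : B -> option 'I_n) : Prop :=
  (forall i, 0 <= p i) /\ nonincreasing_pricing p /\
  (forall i, (#|[set b | x b == Some i]| <= C i)%N) /\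
  (forall b i, x b = Some i -> p i <= (v i b)%:R).

Definition profit_PL (n : nat) (B : finType) (p : 'I_n -> rat)
  (x : B -> option 'I_n) : rat :=
  \sum_(b : B) (if x b is Some i then p i else 0).

(* max_{i,b} v_{ib} (0 if there are no items or no bidders) *)
Definition vmax (n : nat) (B : finType) (v : 'I_n -> B -> nat) : nat :=
  \max_(ib : 'I_n * B) v ib.1 ib.2.

Definition dk (n : nat) (B : finType) (v : 'I_n -> B -> nat) (alpha : rat)
  (k : nat) : rat := (vmax v)%:R / alpha ^+ k.

Definition in_group (n : nat) (B : finType) (v : 'I_n -> B -> nat) (alpha : rat)
  (t r : nat) (x : rat) : Prop :=
  exists k : nat, (r * t <= k < r.+1 * t)%N /\ x = dk v alpha k.

Definition feasible_PLat (n : nat) (B : finType) (v : 'I_n -> B -> nat)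
  (C : 'I_n -> nat) (alpha : rat) (t : nat) (p : 'I_n -> rat)
  (S : {set 'I_n * B}) : Prop :=
  nonincreasing_pricing p /\
  (forall i, exists k : nat, p i = dk v alpha k) /\
  (forall i, (#|[set b | (i, b) \in S]| <= C i)%N) /\
  (forall i b, (i, b) \in S -> p i <= (v i b)%:R) /\
  (forall (r : nat) (b : B) (i j : 'I_n), (i, b) \in S -> (j, b) \in S ->
      in_group v alpha t r (p i) -> in_group v alpha t r (p j) -> i = j).

Definition profit_PLat (n : nat) (B : finType) (p : 'I_n -> rat)
  (S : {set 'I_n * B}) : rat :=
  \sum_(ib in S) p ib.1.

(* Round every positive price down to the grid d_0 > d_1 > ...: the rounded
   price is the largest grid point not above it, so it loses at most a factor
   alpha, and rounding keeps prices non-increasing and below valuations.  No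
   price exceeds d_0 = max v, and finitely many positive prices all lie above
   some d_K, so only d_0, ..., d_K are needed.  Zero prices are dropped from
   the allocation; every bidder keeps at most one item, so the group
   constraint holds whatever t is. *)

From mathcomp Require Import all_boot all_order all_algebra.
From mathcomp Require Import ring.
Set Implicit Arguments. Unset Strict Implicit.
Import Order.TTheory GRing.Theory Num.Theory.
Local Open Scope ring_scope.

Lemma bernoulli_ler (R : realDomainType) (h : R) (k : nat) :
  0 <= h -> 1 + h *+ k <= (1 + h) ^+ k.
Proof.
move=> h_ge0; elim: k => [|k IHk]; first by rewrite mulr0n addr0 expr0.
rewrite exprS; apply: le_trans (ler_wpM2l _ IHk); last by rewrite addr_ge0.
have hhk_ge0 : 0 <= h * (h *+ k) by rewrite mulr_ge0 ?mulrn_wge0.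
rewrite -subr_ge0 mulrS; move: hhk_ge0; set hk := h *+ k.
suff -> : (1 + h) * (1 + hk) - (1 + (h + hk)) = h * hk by [].
by ring.
Qed.

Lemma exprn_unbounded (R : archiRealFieldType) (a c : R) :
  1 < a -> exists k, c <= a ^+ k.
Proof.
rewrite -subr_gt0 => h_gt0; set h := a - 1 in h_gt0.
exists (Num.bound (`|c| / h)).
have := archi_boundP (divr_ge0 (normr_ge0 c) (ltW h_gt0)).
rewrite ltr_pdivrMr // => /ltW c_le; apply: le_trans (ler_norm c) _.
apply: (le_trans c_le); rewrite mulrC mulr_natr.
have -> : a = 1 + h by rewrite /h addrC subrK.
by apply: le_trans (bernoulli_ler _ (ltW h_gt0)); rewrite -subr_ge0 addrK.
Qed.

Section PriceGrid.

Variables (n : nat) (B : finType) (v : 'I_n -> B -> nat) (alpha : rat).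
Hypothesis alpha_gt1 : 1 < alpha.
Local Notation d := (dk v alpha).

Let alpha_gt0 : 0 < alpha. Proof. exact: lt_trans alpha_gt1. Qed.

Lemma dk0 : d 0 = (vmax v)%:R.
Proof. by rewrite /dk expr0 divr1. Qed.

Lemma dkS k : d k.+1 = d k / alpha.
Proof. by rewrite /dk exprS invfM mulrA mulrAC. Qed.

Lemma dk_nonincreasing k m : (k <= m)%N -> d m <= d k.
Proof.
move=> le_km; rewrite /dk ler_wpM2l // lef_pV2 ?posrE ?exprn_gt0 //.
by rewrite ler_eXn2l.
Qed.

Lemma dk_le_pos (q : rat) : 0 < q -> exists k, d k <= q.
Proof.
move=> q_gt0; have [k le_vq] := exprn_unbounded ((vmax v)%:R / q) alpha_gt1.
by exists k; rewrite ler_pdivrMr ?exprn_gt0 // mulrC -ler_pdivrMr.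
Qed.

Lemma dk_le_pos_fin (I : finType) (f : I -> rat) :
  exists K, forall i, 0 < f i -> d K <= f i.
Proof.
have /fin_all_exists [k dk_le] : forall i, exists k, 0 < f i -> d k <= f i.
  move=> i; have [/dk_le_pos[k ?]|_] := ltP 0 (f i); first by exists k.
  by exists 0%N.
exists (\max_i k i)%N => i /dk_le; apply: le_trans.
by apply: dk_nonincreasing; apply: leq_bigmax.
Qed.

(* Index of the first grid point below [q], or [K] if none of d_0..d_{K-1} is. *)
Definition grid_index (K : nat) (q : rat) : nat :=
  find (fun k => d k <= q) (iota 0 K).

Lemma grid_index_leq K q : (grid_index K q <= K)%N.
Proof. by have := find_size (fun k => d k <= q) (iota 0 K); rewrite size_iota. Qed.

Lemma before_grid_index K q k : (k < grid_index K q)%N -> q < d k.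
Proof.
move=> lt_k; have lt_kK := leq_trans lt_k (grid_index_leq K q).
by have := before_find 0%N lt_k; rewrite nth_iota // add0n ltNge => ->.
Qed.

Lemma dk_grid_index_lt K q : (grid_index K q < K)%N -> d (grid_index K q) <= q.
Proof.
move=> lt_iK; have := nth_find 0%N (a := fun k => d k <= q) (s := iota 0 K).
by rewrite has_find size_iota nth_iota // add0n; apply.
Qed.

Lemma dk_grid_index_le K q : d K <= q -> d (grid_index K q) <= q.
Proof.
move=> dK_le; have [/dk_grid_index_lt //|le_Ki] := ltnP (grid_index K q) K.
suff -> : grid_index K q = K by [].
by apply/eqP; rewrite eqn_leq le_Ki grid_index_leq.
Qed.

Lemma grid_index_nonincreasing K q q' :
  q' <= q -> (grid_index K q <= grid_index K q')%N.
Proof.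
move=> le_q'q; have [lt_iK|] := ltnP (grid_index K q') K; last first.
  exact: leq_trans (grid_index_leq K q).
rewrite leqNgt; apply/negP => /before_grid_index.
by rewrite ltNge (le_trans (dk_grid_index_lt lt_iK) le_q'q).
Qed.

Lemma dk_grid_index_ge K q :
  0 <= q -> q <= d 0 -> q / alpha <= d (grid_index K q).
Proof.
move=> q_ge0; case E : (grid_index K q) => [|k] le_q.
  by apply: le_trans le_q; rewrite ler_pdivrMr // ler_peMr // ltW.
have := @before_grid_index K q k; rewrite E ltnSn => /(_ isT) lt_q.
by rewrite dkS ler_pM2r ?invr_gt0 // ltW.
Qed.

End PriceGrid.

Section Profit.

Variables (n : nat) (B : finType).
Implicit Types (q r : 'I_n -> rat) (x : B -> option 'I_n).

Definition alloc_pairs x (P : pred 'I_n) : {set 'I_n * B} :=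
  [set ib | (x ib.2 == Some ib.1) && P ib.1].

Lemma profit_PLat_alloc_pairs q x P :
  profit_PLat q (alloc_pairs x P) = profit_PL (fun i => if P i then q i else 0) x.
Proof.
rewrite /profit_PLat /profit_PL big_mkcond.
transitivity (\sum_i \sum_b (if (i, b) \in alloc_pairs x P then q i else 0)).
  by rewrite pair_bigA; apply: eq_bigr => -[i b].
rewrite exchange_big /=.
apply: eq_bigr => b _; under eq_bigr => i _ do rewrite inE /=.
case: (x b) => [i0|]; last by rewrite big1.
rewrite (bigD1 i0) //= eqxx /= big1 ?addr0 // => i ne_i.
by rewrite eq_sym (inj_eq Some_inj) (negbTE ne_i).
Qed.

Lemma profit_PL_divr q x c : profit_PL q x / c = profit_PL (fun i => q i / c) x.
Proof.
by rewrite /profit_PL mulr_suml; apply: eq_bigr => b _; case: (x b); rewrite ?mul0r.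
Qed.

Lemma ler_profit_PL q r x :
  (forall b i, x b = Some i -> q i <= r i) -> profit_PL q x <= profit_PL r x.
Proof.
by move=> le_qr; apply: ler_sum => b _; case E: (x b) => [i|] //; exact: le_qr E.
Qed.

End Profit.

Lemma v_le_vmax (n : nat) (B : finType) (v : 'I_n -> B -> nat) i b :
  (v i b <= vmax v)%N.
Proof. exact: (@leq_bigmax _ (fun ib : 'I_n * B => v ib.1 ib.2) (i, b)). Qed.

Theorem lemma15 (alpha : rat) (t : nat) (n : nat) (B : finType)
  (v : 'I_n -> B -> nat) (C : 'I_n -> nat) :
  1 < alpha -> (0 < t)%N ->
  forall (p : 'I_n -> rat) (x : B -> option 'I_n),
    feasible_PL v C p x ->
    exists (p' : 'I_n -> rat) (S : {set 'I_n * B}),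
      feasible_PLat v C alpha t p' S /\
      profit_PL p x / alpha <= profit_PLat p' S.
Proof.
move=> alpha_gt1 _ p x [p_ge0 [p_noninc [p_cap p_val]]].
have [K dK_le] := dk_le_pos_fin v alpha_gt1 p.
pose p' i := dk v alpha (grid_index v alpha K (p i)).
have p_le_vmax b i : x b = Some i -> p i <= (vmax v)%:R.
  by move=> /p_val/le_trans; apply; rewrite ler_nat v_le_vmax.
exists p', (alloc_pairs x (fun i => 0 < p i)); split; last first.
  rewrite profit_PLat_alloc_pairs profit_PL_divr; apply: ler_profit_PL => b i xb.
  have [_|p_le0] := ltP 0 (p i); last first.
    have -> : p i = 0 by apply/eqP; rewrite eq_le p_le0 p_ge0.
    by rewrite mul0r.
  by apply: dk_grid_index_ge; rewrite ?dk0 ?(p_le_vmax b).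
split.
  by move=> i j /p_noninc/grid_index_nonincreasing/dk_nonincreasing; apply.
split; first by move=> i; exists (grid_index v alpha K (p i)).
split.
  move=> i; apply: leq_trans (p_cap i); apply: subset_leq_card.
  by apply/subsetP => b; rewrite !inE => /andP[].
split.
  move=> i b; rewrite inE /= => /andP[/eqP xb p_gt0].
  exact: le_trans (dk_grid_index_le (dK_le _ p_gt0)) (p_val _ _ xb).
move=> r b i j; rewrite !inE /= => /andP[/eqP -> _] /andP[/eqP [->] _] _ _ //.
Qed.
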